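(* Let $\sigma,\tau\in\mathcal T$, let $(w_n),(x_n)$ be defining sequences for $\sigma$ and $(y_n),(z_n)$ defining sequences for $\tau$. Then (i) for every $\alpha\in\mathbb Q$ the limits $\lim_n\overline{\alpha w_n}$ and $\lim_n\overline{\alpha x_n}$ exist in $\mathbb R^{\mathbb Q\times\Delta}$ and are equal; (ii) the iterated limits $\lim_n\lim_m\overline{w_n+y_m}$ and $\lim_n\lim_m\overline{x_n+z_m}$ exist and are equal.
   Context: Standing setting: $(X,\|\cdot\|)$ is a separable infinite-dimensional Banach space and $d$ is a translation-invariant ($d(x,y)=d(x-y,0)$) stable pseudometric on $X$ such that $\mathrm{Id}\colon(X,\|\cdot\|)\to(X,d)$ is a coarse equivalence ($\omega_{\mathrm{Id}}(t)=\sup\{d(x,y):\|x-y\|\le t\}<\infty$ for all $t$, $\rho_{\mathrm{Id}}(t)=\inf\{d(x,y):\|x-y\|\ge t\}\to\infty$). Stability: $\lim_{i,\mathcal U}\lim_{j,\mathcal V}d(x_i,y_j)=\lim_{j,\mathcal V}\lim_{i,\mathcal U}d(x_i,y_j)$ for bounded sequences and nonprincipal ultrafilters on $\mathbb N$. $\Delta$ is a countable $\|\cdot\|$-dense $\mathbb Q$-linear subspace of $X$; for $x\in\Delta$, $\bar x(\lambda,y)=d(\lambda x,y)$ for $(\lambda,y)\in\mathbb Q\times\Delta$. $\mathcal T$ is the closure of $\{\bar x:x\in\Delta\}$ in $\mathbb R^{\mathbb Q\times\Delta}$ (pointwise topology). A defining sequence for $\sigma\in\mathcal T$ is a sequence $(x_n)$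 in $\Delta$ with $\bar x_n\to\sigma$ pointwise. *)

From Stdlib Require Import Reals QArith Qreals List.
Open Scope R_scope.

Record NormedSpace (X : Type) := {
  vzero : X;
  vadd : X -> X -> X;
  vopp : X -> X;
  vscal : R -> X -> X;
  vnorm : X -> R;
  vadd_assoc : forall x y z, vadd x (vadd y z) = vadd (vadd x y) z;
  vadd_comm : forall x y, vadd x y = vadd y x;
  vadd_0 : forall x, vadd x vzero = x;
  vadd_opp : forall x, vadd x (vopp x) = vzero;
  vscal_1 : forall x, vscal 1 x = x;
  vscal_assoc : forall a b x, vscal a (vscal b x) = vscal (a * b) x;
  vscal_addr : forall a x y, vscal a (vadd x y) = vadd (vscal a x) (vscal a y);
  vscal_addl : forall a b x, vscal (a + b) x = vadd (vscal a x) (vscal b x);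
  vnorm_nonneg : forall x, 0 <= vnorm x;
  vnorm_eq0 : forall x, vnorm x = 0 -> x = vzero;
  vnorm_scal : forall a x, vnorm (vscal a x) = Rabs a * vnorm x;
  vnorm_triangle : forall x y, vnorm (vadd x y) <= vnorm x + vnorm y
}.

Arguments vzero {X} _.
Arguments vadd {X} _ _ _.
Arguments vopp {X} _ _.
Arguments vscal {X} _ _ _.
Arguments vnorm {X} _ _.

Definition vsub {X} (N : NormedSpace X) (x y : X) : X := vadd N x (vopp N y).

Definition complete {X} (N : NormedSpace X) : Prop :=
  forall u : nat -> X,
    (forall eps, eps > 0 -> exists M, forall m n, (m >= M)%nat -> (n >= M)%nat ->
        vnorm N (vsub N (u m) (u n)) < eps) ->
    exists l, forall eps, eps > 0 -> exists M, forall n, (n >= M)%nat ->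
        vnorm N (vsub N (u n) l) < eps.

Definition norm_dense {X} (N : NormedSpace X) (D : X -> Prop) : Prop :=
  forall x eps, eps > 0 -> exists y, D y /\ vnorm N (vsub N x y) < eps.

Definition countable_set {X} (D : X -> Prop) : Prop :=
  exists e : nat -> X, forall x, D x <-> exists n, e n = x.

Definition separable {X} (N : NormedSpace X) : Prop :=
  exists D : X -> Prop, countable_set D /\ norm_dense N D.

Fixpoint lin_comb {X} (N : NormedSpace X) (l : list X) (c : list R) : X :=
  match l, c with
  | x :: l', a :: c' => vadd N (vscal N a x) (lin_comb N l' c')
  | _, _ => vzero N
  end.

Definition in_span {X} (N : NormedSpace X) (l : list X) (x : X) : Prop :=
  exists c : list R, lin_comb N l c = x.

Definition infinite_dimensional {X} (N : NormedSpace X) : Prop :=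
  forall l : list X, exists x, ~ in_span N l x.

Definition separable_inf_dim_Banach {X} (N : NormedSpace X) : Prop :=
  complete N /\ separable N /\ infinite_dimensional N.

Definition pseudometric {X} (d : X -> X -> R) : Prop :=
  (forall x, d x x = 0) /\ (forall x y, 0 <= d x y) /\
  (forall x y, d x y = d y x) /\ (forall x y z, d x z <= d x y + d y z).

Definition translation_invariant {X} (N : NormedSpace X) (d : X -> X -> R) : Prop :=
  forall x y, d x y = d (vsub N x y) (vzero N).

(* Id : (X,||.||) -> (X,d) is a coarse equivalence:
   omega_Id(t) < oo for all t, and rho_Id(t) -> oo. *)
Definition coarse_equiv_Id {X} (N : NormedSpace X) (d : X -> X -> R) : Prop :=
  (forall t, exists M, forall x y, vnorm N (vsub N x y) <= t -> d x y <= M) /\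
  (forall K, exists t0, forall t, t >= t0 ->
       forall x y, vnorm N (vsub N x y) >= t -> d x y >= K).

Definition ultrafilter (U : (nat -> Prop) -> Prop) : Prop :=
  U (fun _ => True) /\ ~ U (fun _ => False) /\
  (forall A B : nat -> Prop, U A -> (forall n, A n -> B n) -> U B) /\
  (forall A B : nat -> Prop, U A -> U B -> U (fun n => A n /\ B n)) /\
  (forall A : nat -> Prop, U A \/ U (fun n => ~ A n)).

Definition nonprincipal (U : (nat -> Prop) -> Prop) : Prop :=
  forall k, ~ U (fun n => n = k).

Definition ulim (U : (nat -> Prop) -> Prop) (f : nat -> R) (l : R) : Prop :=
  forall eps, eps > 0 -> U (fun n => Rabs (f n - l) < eps).

Definition bounded_seq {X} (N : NormedSpace X) (x : nat -> X) : Prop :=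
  exists M, forall n, vnorm N (x n) <= M.

Definition stable {X} (N : NormedSpace X) (d : X -> X -> R) : Prop :=
  forall (U V : (nat -> Prop) -> Prop) (x y : nat -> X),
    ultrafilter U -> nonprincipal U -> ultrafilter V -> nonprincipal V ->
    bounded_seq N x -> bounded_seq N y ->
    forall (a : nat -> R) (l1 : R) (b : nat -> R) (l2 : R),
      (forall i, ulim V (fun j => d (x i) (y j)) (a i)) -> ulim U a l1 ->
      (forall j, ulim U (fun i => d (x i) (y j)) (b j)) -> ulim V b l2 ->
      l1 = l2.

Definition Q_linear_subspace {X} (N : NormedSpace X) (D : X -> Prop) : Prop :=
  D (vzero N) /\ (forall x y, D x -> D y -> D (vadd N x y)) /\
  (forall (q : Q) x, D x -> D (vscal N (Q2R q) x)).

Definition DeltaT {X} (D : X -> Prop) := { y : X | D y }.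

Definition xbar {X} (N : NormedSpace X) (d : X -> X -> R) (D : X -> Prop)
  (x : X) : Q -> DeltaT D -> R :=
  fun lam y => d (vscal N (Q2R lam) x) (proj1_sig y).

Definition pw_conv {X} (D : X -> Prop) (f : nat -> Q -> DeltaT D -> R)
  (g : Q -> DeltaT D -> R) : Prop :=
  forall lam y, Un_cv (fun n => f n lam y) (g lam y).

(* sigma lies in the pointwise (product-topology) closure T of {xbar : x in Delta}:
   every basic neighbourhood of sigma meets that set. *)
Definition in_T {X} (N : NormedSpace X) (d : X -> X -> R) (D : X -> Prop)
  (sigma : Q -> DeltaT D -> R) : Prop :=
  forall (F : list (Q * DeltaT D)) eps, eps > 0 ->
    exists x, D x /\ forall p, In p F ->
      Rabs (xbar N d D x (fst p) (snd p) - sigma (fst p) (snd p)) < eps.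

Definition defining_seq {X} (N : NormedSpace X) (d : X -> X -> R) (D : X -> Prop)
  (sigma : Q -> DeltaT D -> R) (x : nat -> X) : Prop :=
  (forall n, D (x n)) /\ pw_conv D (fun n => xbar N d D (x n)) sigma.

(* Part (i) is a rescaling: the bar of [alpha u_n] at [(lam, v)] is the bar
   of [u_n] at [(lam * alpha, v)].  For part (ii), translation invariance gives
   [d(lam (w_n + y_m), v) = d(lam y_m, v - lam w_n) = d(lam w_n, v - lam y_m)].
   The inner limit is therefore [tau(lam, v - lam w_n)], which only depends on
   [tau]; in the other order one gets [sigma(lam, v - lam y_m)].  Testing
   stability against every nonprincipal ultrafilter shows that both iterated
   limits of this bounded double sequence exist and coincide, and the second
   one does not involve [w], so [w] and [x] lead to the same outer limit. *)

From Stdlib Require Import Reals QArith Qreals Lra Lia Classical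
  IndefiniteDescription.
From mathcomp Require filter.
Open Scope R_scope.

Lemma ultrafilter_containing (P : nat -> Prop) :
  (forall M, exists n, (M <= n)%nat /\ P n) ->
  exists U, ultrafilter U /\ nonprincipal U /\ U P.
Proof.
  intros HP.
  set (F := fun A : nat -> Prop => exists M, forall n, (M <= n)%nat -> P n -> A n).
  assert (FF : filter.ProperFilter F).
  { apply filter.Build_ProperFilter_ex.
    - intros A [M HM]. destruct (HP M) as [n [h1 h2]]. exists n. auto.
    - constructor.
      + exists 0%nat. constructor.
      + intros A B [M1 H1] [M2 H2]. exists (Nat.max M1 M2). intros n hn pn.
        split; [apply H1 | apply H2]; auto; lia.
      + intros A B AB [M HM]. exists M. intros n hn pn. apply AB, HM; auto. }
  destruct (filter.ultraFilterLemma FF) as [G [GU FG]].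
  exists G. split; [|split].
  - split; [|split; [|split; [|split]]].
    + apply filter.filterT.
    + apply (filter.filter_not_empty G).
    + intros A B GA AB. exact (filter.filterS AB GA).
    + intros A B GA GB. exact (filter.filterI GA GB).
    + intro A. exact (filter.in_ultra_setVsetC A GU).
  - intros k Gk.
    assert (Gnk : G (fun n => n <> k)).
    { apply FG. exists (S k). intros n hn _ ->. lia. }
    apply (filter.filter_not_empty G).
    apply (filter.filterS (fun n (h : n = k /\ n <> k) => proj2 h (proj1 h))).
    exact (filter.filterI Gk Gnk).
  - apply FG. exists 0%nat. auto.
Qed.

Lemma nonprincipal_ultrafilter_exists :
  exists U, ultrafilter U /\ nonprincipal U.
Proof.
  destruct (ultrafilter_containing (fun _ => True)) as [U [HU [HUn _]]].
  - intro M. exists M. auto.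
  - exists U. auto.
Qed.

Lemma ultrafilter_tail U :
  ultrafilter U -> nonprincipal U -> forall M, U (fun n => (M <= n)%nat).
Proof.
  intros [HT [_ [Hmono [Hinter Hcompl]]]] Hnp M. induction M as [|M IH].
  - apply (Hmono _ _ HT). intros; lia.
  - assert (Hne : U (fun n => n <> M)).
    { destruct (Hcompl (fun n => n = M)) as [h|h]; [exfalso; exact (Hnp M h)|exact h]. }
    apply (Hmono _ _ (Hinter _ _ IH Hne)). intros n [h1 h2]. lia.
Qed.

Lemma Un_cv_ulim U f l :
  ultrafilter U -> nonprincipal U -> Un_cv f l -> ulim U f l.
Proof.
  intros HU Hnp Hcv eps Heps. destruct (Hcv eps Heps) as [M HM].
  pose proof (ultrafilter_tail U HU Hnp M) as Htail.
  destruct HU as [_ [_ [Hmono _]]].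
  apply (Hmono _ _ Htail). intros n hn. apply HM. lia.
Qed.

(* The candidate limit is the supremum of the [t] with [t <= f n] [U]-often. *)
Lemma ulim_exists_bounded U f K :
  ultrafilter U -> (forall n, Rabs (f n) <= K) -> exists l, ulim U f l.
Proof.
  intros [HT [HF [Hmono [Hinter Hcompl]]]] Hb.
  assert (Hb' : forall n, - K <= f n <= K).
  { intro n. specialize (Hb n). unfold Rabs in Hb. destruct (Rcase_abs (f n)); lra. }
  set (E := fun t => U (fun n => t <= f n)).
  assert (HEb : bound E).
  { exists K. intros t Ht. apply Rnot_lt_le. intro Hlt. apply HF.
    apply (Hmono _ _ Ht). intros n hn. specialize (Hb' n). lra. }
  assert (HEne : exists t, E t).
  { exists (- K). apply (Hmono _ _ HT). intros n _. apply Hb'. }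
  destruct (completeness E HEb HEne) as [l [Hub Hlub]].
  exists l. intros eps Heps.
  assert (Hbelow : U (fun n => f n < l + eps)).
  { destruct (Hcompl (fun n => f n < l + eps)) as [h|h]; auto.
    assert (Hin : E (l + eps)) by (apply (Hmono _ _ h); intros n hn; lra).
    specialize (Hub _ Hin). lra. }
  assert (Habove : exists t, E t /\ l - eps < t).
  { apply NNPP. intro Hno.
    assert (Hle : l <= l - eps).
    { apply Hlub. intros t Et. apply Rnot_lt_le. intro Hlt. apply Hno. eauto. }
    lra. }
  destruct Habove as [t [Et Ht]].
  apply (Hmono _ _ (Hinter _ _ Hbelow Et)). intros n [h1 h2]. apply Rabs_def1; lra.
Qed.

Lemma Un_cv_of_ulim a l K :
  (forall n, Rabs (a n) <= K) ->
  (forall U l', ultrafilter U -> nonprincipal U -> ulim U a l' -> l' = l) ->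
  Un_cv a l.
Proof.
  intros Hb Hlim. apply NNPP. intro Hncv.
  assert (Hoften : exists eps, eps > 0 /\
            forall M, exists n, (M <= n)%nat /\ ~ R_dist (a n) l < eps).
  { apply NNPP. intro H1. apply Hncv. intros eps Heps.
    apply NNPP. intro H2. apply H1. exists eps. split; auto. intro M.
    apply NNPP. intro H3. apply H2. exists M. intros n hn.
    apply NNPP. intro H4. apply H3. exists n. auto. }
  destruct Hoften as [eps [Heps Hoften]].
  destruct (ultrafilter_containing _ Hoften) as [U [HU [HUn HUoften]]].
  destruct (ulim_exists_bounded U a K HU Hb) as [l' Hl'].
  rewrite (Hlim U l' HU HUn Hl') in Hl'.
  destruct HU as [_ [HF [Hmono [Hinter _]]]].
  apply HF. apply (Hmono _ _ (Hinter _ _ (Hl' eps Heps) HUoften)).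
  intros n [h1 h2]. exact (h2 h1).
Qed.

Lemma Un_cv_Rabs_le g l K :
  Un_cv g l -> (forall n, Rabs (g n) <= K) -> Rabs l <= K.
Proof.
  intros Hcv Hb. apply (Rle_cv_lim (Un := fun n => Rabs (g n)) (Vn := fun _ => K)).
  - exact Hb.
  - apply cv_cvabs, Hcv.
  - intros eps Heps. exists 0%nat. intros n _. rewrite R_dist_eq. exact Heps.
Qed.

Section VectorSpace.

Variables (X : Type) (N : NormedSpace X).

Lemma vadd_0l x : vadd N (vzero N) x = x.
Proof. rewrite vadd_comm. apply vadd_0. Qed.

Lemma vadd_cancel_l a b c : vadd N a b = vadd N a c -> b = c.
Proof.
  intro H.
  assert (E : forall t, vadd N (vopp N a) (vadd N a t) = t).
  { intro t. rewrite vadd_assoc, (vadd_comm _ N (vopp N a)), vadd_opp. apply vadd_0l. }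
  rewrite <- (E b), <- (E c), H. reflexivity.
Qed.

Lemma vscal_0 x : vscal N 0 x = vzero N.
Proof.
  apply (vadd_cancel_l (vscal N 0 x)).
  rewrite <- vscal_addl, vadd_0, Rplus_0_r. reflexivity.
Qed.

Lemma vopp_scal x : vopp N x = vscal N (-1) x.
Proof.
  apply (vadd_cancel_l x). rewrite vadd_opp.
  rewrite <- (vscal_1 _ N x) at 1. rewrite <- vscal_addl, Rplus_opp_r.
  symmetry. apply vscal_0.
Qed.

Lemma vscal_vzero a : vscal N a (vzero N) = vzero N.
Proof. rewrite <- (vscal_0 (vzero N)), vscal_assoc, Rmult_0_r. reflexivity. Qed.

Lemma vsub_0 x : vsub N x (vzero N) = x.
Proof. unfold vsub. rewrite vopp_scal, vscal_vzero. apply vadd_0. Qed.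

Lemma vsub_vsub_r a v b : vsub N a (vsub N v b) = vsub N (vadd N a b) v.
Proof.
  unfold vsub. rewrite !vopp_scal, vscal_addr, vscal_assoc.
  replace (-1 * -1) with 1 by ring. rewrite vscal_1.
  rewrite vadd_assoc, <- (vadd_assoc _ N a b), (vadd_comm _ N b), vadd_assoc.
  reflexivity.
Qed.

Lemma vnorm_opp x : vnorm N (vopp N x) = vnorm N x.
Proof.
  rewrite vopp_scal, vnorm_scal, Rabs_left by lra. ring.
Qed.

Lemma vnorm_sub_le x y : vnorm N (vsub N x y) <= vnorm N x + vnorm N y.
Proof. unfold vsub. rewrite <- (vnorm_opp y). apply vnorm_triangle. Qed.

Lemma bounded_seq_scal c u :
  bounded_seq N u -> bounded_seq N (fun n => vscal N c (u n)).
Proof.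
  intros [M HM]. exists (Rabs c * M). intro n. rewrite vnorm_scal.
  apply Rmult_le_compat_l; [apply Rabs_pos | apply HM].
Qed.

Lemma bounded_seq_sub_l v u :
  bounded_seq N u -> bounded_seq N (fun n => vsub N v (u n)).
Proof.
  intros [M HM]. exists (vnorm N v + M). intro n.
  pose proof (vnorm_sub_le v (u n)). specialize (HM n). lra.
Qed.

Lemma Q_linear_subspace_sub_scal (D : X -> Prop) (q : Q) v x :
  Q_linear_subspace N D -> D v -> D x -> D (vsub N v (vscal N (Q2R q) x)).
Proof.
  intros [_ [Hadd Hscal]] Hv Hx. unfold vsub.
  rewrite vopp_scal, vscal_assoc.
  replace (-1 * Q2R q) with (Q2R (- q)) by (rewrite Q2R_opp; ring).
  apply Hadd; auto.
Qed.

End VectorSpace.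

Section StableMetric.

Variables (X : Type) (N : NormedSpace X) (d : X -> X -> R) (D : X -> Prop).
Hypothesis Hd : pseudometric d.
Hypothesis Hti : translation_invariant N d.
Hypothesis Hce : coarse_equiv_Id N d.
Hypothesis Hst : stable N d.
Hypothesis HDq : Q_linear_subspace N D.

Lemma d_bounded_on_bounded s t :
  bounded_seq N s -> bounded_seq N t ->
  exists K, forall n m, Rabs (d (s n) (t m)) <= K.
Proof.
  intros [Ms Hs] [Mt Ht]. destruct Hce as [Homega _].
  destruct (Homega (Ms + Mt)) as [K HK]. exists K. intros n m.
  destruct Hd as [_ [Hpos _]]. rewrite Rabs_right by (apply Rle_ge, Hpos).
  apply HK. pose proof (vnorm_sub_le X N (s n) (t m)). specialize (Hs n). specialize (Ht m).
  lra.
Qed.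

Lemma stable_iterated_limits s t a b :
  bounded_seq N s -> bounded_seq N t ->
  (forall n, Un_cv (fun m => d (s n) (t m)) (a n)) ->
  (forall m, Un_cv (fun n => d (s n) (t m)) (b m)) ->
  exists l, Un_cv a l /\ Un_cv b l.
Proof.
  intros Bs Bt Ha Hb.
  destruct (d_bounded_on_bounded s t Bs Bt) as [K HK].
  assert (Ka : forall n, Rabs (a n) <= K).
  { intro n. apply (Un_cv_Rabs_le _ _ K (Ha n)). intro m. apply HK. }
  assert (Kb : forall m, Rabs (b m) <= K).
  { intro m. apply (Un_cv_Rabs_le _ _ K (Hb m)). intro n. apply HK. }
  destruct nonprincipal_ultrafilter_exists as [V [HV HVn]].
  destruct (ulim_exists_bounded V b K HV Kb) as [l Hl].
  assert (Hal : Un_cv a l).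
  { apply (Un_cv_of_ulim a l K Ka). intros U l' HU HUn Hl'.
    apply (Hst U V s t HU HUn HV HVn Bs Bt a l' b l); auto;
      intro; apply Un_cv_ulim; auto. }
  exists l. split; [exact Hal|].
  apply (Un_cv_of_ulim b l K Kb). intros V' l' HV' HV'n Hl'.
  destruct nonprincipal_ultrafilter_exists as [U [HU HUn]].
  symmetry. apply (Hst U V' s t HU HUn HV' HV'n Bs Bt a l b l'); auto;
    intro; apply Un_cv_ulim; auto.
Qed.

Lemma defining_seq_bounded sigma u :
  defining_seq N d D sigma u -> bounded_seq N u.
Proof.
  intros [_ Hcv]. destruct HDq as [H0 _].
  set (o := exist D (vzero N) H0).
  destruct (maj_by_pos _ (exist _ _ (Hcv 1%Q o))) as [K [_ HK]].
  destruct Hce as [_ Hrho]. destruct (Hrho (K + 1)) as [t0 Ht0].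
  exists t0. intro n. apply Rnot_lt_le. intro Hlt.
  specialize (HK n). unfold xbar in HK. simpl in HK.
  replace (Q2R 1) with 1 in HK by (unfold Q2R; simpl; field).
  rewrite vscal_1 in HK.
  pose proof (Ht0 t0 (Rge_refl _) (u n) (vzero N)) as Hfar.
  rewrite vsub_0 in Hfar. pose proof (RRle_abs (d (u n) (vzero N))). lra.
Qed.

Definition dshift (v : DeltaT D) (lam : Q) (x : X) (hx : D x) : DeltaT D :=
  exist D (vsub N (proj1_sig v) (vscal N (Q2R lam) x))
    (Q_linear_subspace_sub_scal X N D lam _ x HDq (proj2_sig v) hx).

Lemma xbar_scal (alpha lam : Q) x v :
  xbar N d D (vscal N (Q2R alpha) x) lam v = xbar N d D x (lam * alpha)%Q v.
Proof. unfold xbar. rewrite vscal_assoc, Q2R_mult. reflexivity. Qed.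

Lemma xbar_add (lam : Q) a b (ha : D a) v :
  xbar N d D (vadd N a b) lam v = xbar N d D b lam (dshift v lam a ha).
Proof.
  unfold xbar, dshift. simpl.
  rewrite vscal_addr, Hti, (Hti (vscal N (Q2R lam) b)), vsub_vsub_r, vadd_comm.
  reflexivity.
Qed.

Lemma xbar_dshift_comm (lam : Q) a b (ha : D a) (hb : D b) v :
  xbar N d D a lam (dshift v lam b hb) = xbar N d D b lam (dshift v lam a ha).
Proof.
  unfold xbar, dshift. simpl.
  rewrite Hti, (Hti (vscal N (Q2R lam) b)), !vsub_vsub_r, vadd_comm.
  reflexivity.
Qed.

Lemma defining_seq_scal sigma u (alpha : Q) :
  defining_seq N d D sigma u ->
  pw_conv D (fun n => xbar N d D (vscal N (Q2R alpha) (u n)))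
    (fun lam v => sigma (lam * alpha)%Q v).
Proof.
  intros [_ Hcv] lam v.
  apply (Un_cv_ext (fun n => xbar N d D (u n) (lam * alpha)%Q v)).
  - intro n. symmetry. apply xbar_scal.
  - apply Hcv.
Qed.

Lemma defining_seq_add_l tau t a (ha : D a) :
  defining_seq N d D tau t ->
  pw_conv D (fun m => xbar N d D (vadd N a (t m)))
    (fun lam v => tau lam (dshift v lam a ha)).
Proof.
  intros [_ Hcv] lam v.
  apply (Un_cv_ext (fun m => xbar N d D (t m) lam (dshift v lam a ha))).
  - intro m. symmetry. apply xbar_add.
  - apply Hcv.
Qed.

(* The double sequence is [d(lam u_n, v - lam y_m)]: its limit in [m] is read
   through [y] after swapping the roles of [u_n] and [y_m], its limit in [n]
   directly through [u]. *)
Lemma defining_seq_dshift_limits sigma tau u y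
  (Hu : defining_seq N d D sigma u) (Hy : defining_seq N d D tau y) lam v :
  exists l,
    Un_cv (fun n => tau lam (dshift v lam (u n) (proj1 Hu n))) l /\
    Un_cv (fun m => sigma lam (dshift v lam (y m) (proj1 Hy m))) l.
Proof.
  apply (stable_iterated_limits
           (fun n => vscal N (Q2R lam) (u n))
           (fun m => vsub N (proj1_sig v) (vscal N (Q2R lam) (y m)))).
  - apply bounded_seq_scal. exact (defining_seq_bounded _ _ Hu).
  - apply bounded_seq_sub_l, bounded_seq_scal. exact (defining_seq_bounded _ _ Hy).
  - intro n.
    apply (Un_cv_ext (fun m => xbar N d D (y m) lam (dshift v lam (u n) (proj1 Hu n)))).
    + intro m. apply (xbar_dshift_comm lam (y m) (u n) (proj1 Hy m)).
    + apply (proj2 Hy).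
  - intro m. exact (proj2 Hu lam (dshift v lam (y m) (proj1 Hy m))).
Qed.

End StableMetric.

Theorem lemma4p3 (X : Type) (N : NormedSpace X) (d : X -> X -> R)
  (D : X -> Prop)
  (HX : separable_inf_dim_Banach N)
  (Hd : pseudometric d) (Hti : translation_invariant N d)
  (Hst : stable N d) (Hce : coarse_equiv_Id N d)
  (HD : countable_set D /\ norm_dense N D /\ Q_linear_subspace N D)
  (sigma tau : Q -> DeltaT D -> R)
  (Hsig : in_T N d D sigma) (Htau : in_T N d D tau)
  (w x y z : nat -> X)
  (Hw : defining_seq N d D sigma w) (Hx : defining_seq N d D sigma x)
  (Hy : defining_seq N d D tau y) (Hz : defining_seq N d D tau z) :
  (forall alpha : Q, exists L : Q -> DeltaT D -> R,
      pw_conv D (fun n => xbar N d D (vscal N (Q2R alpha) (w n))) L /\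
      pw_conv D (fun n => xbar N d D (vscal N (Q2R alpha) (x n))) L)
  /\
  (exists (A B : nat -> Q -> DeltaT D -> R) (L : Q -> DeltaT D -> R),
      (forall n, pw_conv D (fun m => xbar N d D (vadd N (w n) (y m))) (A n)) /\
      pw_conv D A L /\
      (forall n, pw_conv D (fun m => xbar N d D (vadd N (x n) (z m))) (B n)) /\
      pw_conv D B L).
Proof.
  destruct HD as [_ [_ HDq]].
  split.
  - intro alpha. exists (fun lam v => sigma (lam * alpha)%Q v).
    split; apply defining_seq_scal; assumption.
  - set (shift := dshift X N D HDq).
    destruct (functional_choice
                (fun (p : Q * DeltaT D) l =>
                   Un_cv (fun m => sigma (fst p) (shift (snd p) (fst p) (y m) (proj1 Hy m))) l))
      as [L HL].
    { intros [lam v].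
      destruct (defining_seq_dshift_limits X N d D Hd Hti Hce Hst HDq
                  sigma tau w y Hw Hy lam v) as [l [_ Hl]].
      exists l. exact Hl. }
    assert (Houter : forall u (Hu : defining_seq N d D sigma u),
               pw_conv D (fun n lam v => tau lam (shift v lam (u n) (proj1 Hu n)))
                 (fun lam v => L (lam, v))).
    { intros u Hu lam v.
      destruct (defining_seq_dshift_limits X N d D Hd Hti Hce Hst HDq
                  sigma tau u y Hu Hy lam v) as [l [Hul Hyl]].
      rewrite (UL_sequence _ _ _ (HL (lam, v)) Hyl). exact Hul. }
    exists (fun n lam v => tau lam (shift v lam (w n) (proj1 Hw n))),
           (fun n lam v => tau lam (shift v lam (x n) (proj1 Hx n))),
           (fun lam v => L (lam, v)).
    repeat split.
    + intro n. apply (defining_seq_add_l X N d D Hti HDq), Hy.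
    + apply Houter.
    + intro n. apply (defining_seq_add_l X N d D Hti HDq), Hz.
    + apply Houter.
Qed.
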